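(* Let $\mathbb{K}$ be an algebraically closed field with $\operatorname{char}(\mathbb{K})\neq 2$. Let \[ A=\frac{\mathbb{K}\langle x_1,x_2,x_3,x_4\rangle}{\langle g_1,\ldots,g_6\rangle}, \] where \[ g_1=x_1x_2-x_2x_1,\quad g_2=x_3x_2-x_2x_3,\quad g_3=x_1x_3-x_3x_1, \] \[ g_4=x_1x_4-x_4x_1-x_1^2+x_4x_3,\quad g_5=x_2x_4-x_4x_2,\quad g_6=x_3x_4-x_4x_3. \] Then the point scheme of $A$ is $Q\cup L\subset\mathbb{P}^3$, where $Q=\mathcal{V}(x_1^2-x_3x_4)$ and $L=\mathcal{V}(x_2,x_3)$; in particular the line $L$ is tangent to the quadric $Q$ at a nonsingular point of $Q$.
   Context: Point scheme: for a quadratic algebra $A=\mathbb{K}\langle x_1,\dots,x_4\rangle/\langle g_1,\dots,g_6\rangle$ with each $g_i=\sum_{j,k}c_{ijk}x_jx_k$ homogeneous of degree 2, let $D$ be the $6\times 4$ matrix with entries $D_{ik}=\sum_j c_{ijk}x_j$ (linear forms in $x_1,\dots,x_4$), so that $g_i(\alpha,\beta):=\sum_{j,k}c_{ijk}\alpha_j\beta_k=(D(\alpha)\beta)_i$ for $(\alpha,\beta)\in\mathbb{P}^3\times\mathbb{P}^3$. The point scheme of $A$ is the subscheme of $\mathbb{P}^3$ (homogeneous coordinates $x_1,\dots,x_4$) defined by the vanishing of all $4\times 4$ minors of $D$; its points are the $\alpha\in\mathbb{P}^3$ for which there exists $\beta\in\mathbb{P}^3$ with $g_i(\alpha,\beta)=0$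 for all $i$. For homogeneous polynomials $f_1,\dots,f_r$, $\mathcal{V}(f_1,\dots,f_r)$ denotes their zero locus (subscheme) in $\mathbb{P}^3$. *)

From HB Require Import structures.
From mathcomp Require Import all_boot all_order all_algebra.
From mathcomp Require Import mpoly.
Set Implicit Arguments. Unset Strict Implicit. Unset Printing Implicit Defensive.
Import GRing.Theory.
Local Open Scope ring_scope.

(* Polynomial ring K[x_1,..,x_4]; variable x_(i+1) is 'X_i for i : 'I_4. *)

Definition in_ideal (K : comNzRingType) (n : nat) (I : finType)
    (g : I -> {mpoly K[n]}) (p : {mpoly K[n]}) : Prop :=
  exists a : I -> {mpoly K[n]}, p = \sum_(i : I) a i * g i.

(* Two homogeneous ideals (given as membership predicates) define the same
   closed subscheme of P^(n-1) iff their saturations w.r.t. the irrelevant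
   ideal (x_1,...,x_n) coincide. *)
Definition sat_incl (K : comNzRingType) (n : nat)
    (I J : {mpoly K[n]} -> Prop) : Prop :=
  forall p, I p -> exists N : nat, forall i : 'I_n, J ('X_i ^+ N * p).

Definition same_subscheme (K : comNzRingType) (n : nat)
    (I J : {mpoly K[n]} -> Prop) : Prop :=
  sat_incl I J /\ sat_incl J I.

(* Quadratic algebra with 6 relations g_i = sum_{j,k} c i j k x_j x_k on 4
   generators: the matrix D with D_ik = sum_j c i j k x_j. *)
Definition Dmat (K : comNzRingType) (c : 'I_6 -> 'I_4 -> 'I_4 -> K)
  : 'M[{mpoly K[4]}]_(6, 4) :=
  \matrix_(i < 6, k < 4) \sum_(j < 4) (c i j k)%:MP * 'X_j.

(* The 4x4 minors of D: determinants of the 4x4 submatrices obtained by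
   choosing rows f 0, .., f 3 (non-injective f give 0, all others give the
   minors up to sign). *)
Definition minor4 (K : comNzRingType) (c : 'I_6 -> 'I_4 -> 'I_4 -> K)
  (f : {ffun 'I_4 -> 'I_6}) : {mpoly K[4]} :=
  \det (rowsub f (Dmat c)).

Definition point_scheme_ideal (K : comNzRingType)
  (c : 'I_6 -> 'I_4 -> 'I_4 -> K) : {mpoly K[4]} -> Prop :=
  in_ideal (minor4 c).

(* Coefficients of the relations g_1..g_6 of the statement
   (indices 0..3 stand for x_1..x_4, 0..5 for g_1..g_6). *)
Definition gcoef (K : comNzRingType) (i : 'I_6) (j k : 'I_4) : K :=
  match nat_of_ord i, nat_of_ord j, nat_of_ord k with
  (* g1 = x1x2 - x2x1 *)
  | 0, 0, 1 => 1 | 0, 1, 0 => -1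
  (* g2 = x3x2 - x2x3 *)
  | 1, 2, 1 => 1 | 1, 1, 2 => -1
  (* g3 = x1x3 - x3x1 *)
  | 2, 0, 2 => 1 | 2, 2, 0 => -1
  (* g4 = x1x4 - x4x1 - x1^2 + x4x3 *)
  | 3, 0, 3 => 1 | 3, 3, 0 => -1 | 3, 0, 0 => -1 | 3, 3, 2 => 1
  (* g5 = x2x4 - x4x2 *)
  | 4, 1, 3 => 1 | 4, 3, 1 => -1
  (* g6 = x3x4 - x4x3 *)
  | 5, 2, 3 => 1 | 5, 3, 2 => -1
  | _, _, _ => 0
  end.

Definition x1 {K : comNzRingType} : {mpoly K[4]} := 'X_(@Ordinal 4 0 isT).
Definition x2 {K : comNzRingType} : {mpoly K[4]} := 'X_(@Ordinal 4 1 isT).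
Definition x3 {K : comNzRingType} : {mpoly K[4]} := 'X_(@Ordinal 4 2 isT).
Definition x4 {K : comNzRingType} : {mpoly K[4]} := 'X_(@Ordinal 4 3 isT).

Definition quadQ (K : comNzRingType) : {mpoly K[4]} := x1 ^+ 2 - x3 * x4.

Definition QL_ideal (K : comNzRingType) (p : {mpoly K[4]}) : Prop :=
  in_ideal (fun _ : 'I_1 => quadQ K) p /\
  in_ideal (fun b : bool => if b then x2 else x3) p.

From HB Require Import structures.
From mathcomp Require Import all_boot all_order all_algebra.
From mathcomp Require Import mpoly.
From mathcomp Require Import ring.

(* Let D be the matrix of the relations and x = (x1, x2, x3, x4). The entries of
   D x are the commutative images of the g_i, so D x = -(x1^2 - x3 x4) e_4; and
   for a point a of L the point b = (a1, 0, 0, a1 + a4) solves D(a) b = 0, i.e.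
   D (x1, 0, 0, x1 + x4) has entries in (x2, x3). By Cramer's rule
   (adj M * M = det M) every 4x4 minor of D times every variable therefore lies in
   (Q) and in (x2, x3). Conversely, modulo (x2, x3) the quadric Q becomes x1^2,
   a non-zero-divisor, so (Q) meets (x2, x3) in Q (x2, x3); and each x_i Q x2,
   x_i Q x3 is a 4x4 minor up to sign. The tangency is checked at (0:0:0:1),
   where the gradient of Q is -e_3. *)

Set Implicit Arguments.
Unset Strict Implicit.
Unset Printing Implicit Defensive.

Import GRing.Theory.
Local Open Scope ring_scope.

Section Ideals.
Variables (R : comNzRingType) (n : nat) (I : finType) (g : I -> {mpoly R[n]}).

Lemma in_ideal0 : in_ideal g 0.
Proof. by exists (fun=> 0); rewrite big1 // => i _; rewrite mul0r. Qed.

Lemma in_ideal_gen i : in_ideal g (g i).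
Proof.
exists (fun j => (j == i)%:R); rewrite (bigD1 i) //= eqxx mul1r big1 ?addr0 //.
by move=> j /negbTE ->; rewrite mul0r.
Qed.

Lemma in_idealD p q : in_ideal g p -> in_ideal g q -> in_ideal g (p + q).
Proof.
move=> [a ->] [b ->]; exists (fun i => a i + b i).
by rewrite -big_split; apply: eq_bigr => i _; rewrite mulrDl.
Qed.

Lemma in_idealMl r p : in_ideal g p -> in_ideal g (r * p).
Proof.
move=> [a ->]; exists (fun i => r * a i).
by rewrite mulr_sumr; apply: eq_bigr => i _; rewrite mulrA.
Qed.

Lemma in_idealN p : in_ideal g p -> in_ideal g (- p).
Proof. by rewrite -mulN1r; apply: in_idealMl. Qed.

Lemma in_idealB p q : in_ideal g p -> in_ideal g q -> in_ideal g (p - q).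
Proof. by move=> gp /in_idealN; apply: in_idealD. Qed.

Lemma in_ideal_sum (J : finType) (F : J -> {mpoly R[n]}) :
  (forall j, in_ideal g (F j)) -> in_ideal g (\sum_j F j).
Proof. by move=> gF; apply: big_ind => //; [apply: in_ideal0 | apply: in_idealD]. Qed.

Lemma in_ideal_trans (J : finType) (h : J -> {mpoly R[n]}) p :
  (forall j, in_ideal g (h j)) -> in_ideal h p -> in_ideal g p.
Proof. by move=> gh [a ->]; apply: in_ideal_sum => j; apply: in_idealMl. Qed.

Lemma in_ideal_mulr_gen q p :
  in_ideal g p -> in_ideal (fun i => g i * q) (p * q).
Proof.
by move=> [a ->]; exists a; rewrite mulr_suml; apply: eq_bigr => i _; rewrite mulrA.
Qed.

Lemma in_ideal_subM a b c d :
  in_ideal g (a - b) -> in_ideal g (c - d) -> in_ideal g (a * c - b * d).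
Proof.
move=> gab gcd; have -> : a * c - b * d = c * (a - b) + b * (c - d) by ring.
by apply: in_idealD; apply: in_idealMl.
Qed.

End Ideals.

Lemma in_ideal_bool (R : comNzRingType) n (g : bool -> {mpoly R[n]}) p :
  in_ideal g p <-> exists u w, p = u * g true + w * g false.
Proof.
split => [[a ->]|[u [w ->]]]; first by exists (a true), (a false); rewrite big_bool.
by exists (fun b => if b then u else w); rewrite big_bool.
Qed.

Lemma det_rowsub_mul_in_ideal (R : comNzRingType) n (I : finType) (g : I -> {mpoly R[n]})
    m p (D : 'M[{mpoly R[n]}]_(m, p)) (v : 'cV_p) (f : 'I_p -> 'I_m) k :
  (forall r, in_ideal g ((D *m v) r 0)) -> in_ideal g (\det (rowsub f D) * v k 0).
Proof.
move=> gDv; set M := rowsub f D.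
have -> : \det M * v k 0 = (\det M *: v) k 0 by rewrite mxE.
have -> : (\det M *: v) k 0 = \sum_j \adj M k j * (D *m v) (f j) 0.
  rewrite -mul_scalar_mx -mul_adj_mx -mulmxA mxE.
  by apply: eq_bigr => j _; rewrite !mxE; congr (_ * _); apply: eq_bigr => l _; rewrite mxE.
by apply: in_ideal_sum => j; apply: in_idealMl.
Qed.

Section Substitution.
Variables (R : comNzRingType) (n : nat) (I : finType) (g : I -> {mpoly R[n]}).
Variable lq : n.-tuple {mpoly R[n]}.
Hypothesis X_sub_comp : forall i, in_ideal g ('X_i - lq`_i).

Lemma in_ideal_sub_comp p : in_ideal g (p - (p \mPo lq)).
Proof.
have exp_sub a b k : in_ideal g (a - b) -> in_ideal g (a ^+ k - b ^+ k).
  move=> gab; elim: k => [|k IHk]; first by rewrite !expr0 subrr; apply: in_ideal0.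
  by rewrite !exprS; apply: in_ideal_subM.
elim/mpolyind: p => [|c m p _ _ IHp]; first by rewrite comp_mpoly0 subrr; apply: in_ideal0.
rewrite comp_mpolyD comp_mpolyZ -!mul_mpolyC.
have -> : c%:MP * 'X_[m] + p - (c%:MP * ('X_[m] \mPo lq) + (p \mPo lq)) =
          c%:MP * ('X_[m] - ('X_[m] \mPo lq)) + (p - (p \mPo lq)) by ring.
apply: in_idealD => //; apply: in_idealMl.
rewrite comp_mpolyX {1}mpolyXE_id.
apply: (big_ind2 (fun a b => in_ideal g (a - b))) => [|a b c' d|i _].
- by rewrite subrr; apply: in_ideal0.
- exact: in_ideal_subM.
- by apply: exp_sub; rewrite (tnth_nth 0).
Qed.

End Substitution.

Lemma in_ideal_mulr_cancel (R : idomainType) n (I : finType) (g : I -> {mpoly R[n]})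
    (lq : n.-tuple {mpoly R[n]}) a q :
  (forall i, in_ideal g ('X_i - lq`_i)) -> (forall i, g i \mPo lq = 0) ->
  q \mPo lq != 0 -> in_ideal g (a * q) -> in_ideal g a.
Proof.
move=> X_sub_comp g_comp0 q_nz [b aqE].
have : (a \mPo lq) * (q \mPo lq) = 0.
  rewrite -rmorphM aqE rmorph_sum big1 // => i _.
  by rewrite rmorphM /= g_comp0 mulr0.
move/eqP; rewrite mulf_eq0 (negbTE q_nz) orbF => /eqP a0.
by rewrite -[a]subr0 -a0; apply: in_ideal_sub_comp X_sub_comp _.
Qed.

Lemma det_mx44 (R : comNzRingType) (b : nat -> nat -> R) :
  \det (\matrix_(i < 4, j < 4) b i j) =
    b 0 0 * b 1 1 * b 2 2 * b 3 3 - b 0 0 * b 1 1 * b 2 3 * b 3 2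
  - b 0 0 * b 1 2 * b 2 1 * b 3 3 + b 0 0 * b 1 2 * b 2 3 * b 3 1
  + b 0 0 * b 1 3 * b 2 1 * b 3 2 - b 0 0 * b 1 3 * b 2 2 * b 3 1
  - b 0 1 * b 1 0 * b 2 2 * b 3 3 + b 0 1 * b 1 0 * b 2 3 * b 3 2
  + b 0 1 * b 1 2 * b 2 0 * b 3 3 - b 0 1 * b 1 2 * b 2 3 * b 3 0
  - b 0 1 * b 1 3 * b 2 0 * b 3 2 + b 0 1 * b 1 3 * b 2 2 * b 3 0
  + b 0 2 * b 1 0 * b 2 1 * b 3 3 - b 0 2 * b 1 0 * b 2 3 * b 3 1
  - b 0 2 * b 1 1 * b 2 0 * b 3 3 + b 0 2 * b 1 1 * b 2 3 * b 3 0
  + b 0 2 * b 1 3 * b 2 0 * b 3 1 - b 0 2 * b 1 3 * b 2 1 * b 3 0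
  - b 0 3 * b 1 0 * b 2 1 * b 3 2 + b 0 3 * b 1 0 * b 2 2 * b 3 1
  + b 0 3 * b 1 1 * b 2 0 * b 3 2 - b 0 3 * b 1 1 * b 2 2 * b 3 0
  - b 0 3 * b 1 2 * b 2 0 * b 3 1 + b 0 3 * b 1 2 * b 2 1 * b 3 0.
Proof.
have expand0 n (A : 'M[R]_n.+1) : \det A =
    \sum_(j < n.+1) (-1) ^+ j * A ord0 j * \det (\matrix_(k, l) A (lift ord0 k) (lift j l)).
  rewrite (expand_det_row A ord0); apply: eq_bigr => j _.
  rewrite /cofactor add0n mulrA [A _ _ * _]mulrC; congr (_ * \det _).
  by apply/matrixP => k l; rewrite !mxE.
do 4 rewrite !expand0 !big_ord_recl !big_ord0.
rewrite !det_mx00 !mxE /= /bump /=.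
ring.
Qed.

Section PointScheme.
Variable K : comNzRingType.

Lemma X_ord4 (i : 'I_4) : 'X_i = [:: x1; x2; x3; x4]`_i :> {mpoly K[4]}.
Proof. by case: i => [[|[|[|[|//]]]] Hi]; rewrite (bool_irrelevance Hi isT). Qed.

Definition Dentry (i k : nat) : {mpoly K[4]} :=
  match i, k with
  | 0, 0 => - x2 | 0, 1 => x1
  | 1, 1 => x3 | 1, 2 => - x2
  | 2, 0 => - x3 | 2, 2 => x1
  | 3, 0 => - x1 - x4 | 3, 2 => x4 | 3, 3 => x1
  | 4, 1 => - x4 | 4, 3 => x2
  | 5, 2 => - x4 | 5, 3 => x3
  | _, _ => 0
  end.

Lemma DmatE : Dmat (@gcoef K) = \matrix_(i, k) Dentry i k.
Proof.
apply/matrixP => i k; rewrite !mxE !big_ord_recl big_ord0 !X_ord4.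
case: i k => [[|[|[|[|[|[|//]]]]]] ?] [[|[|[|[|//]]]] ?];
  rewrite /gcoef /= ?mpolyC0 ?mpolyC1 ?mpolyCN; ring.
Qed.

Definition Lgen (b : bool) : {mpoly K[4]} := if b then x2 else x3.

Lemma Dmat_mulX r :
  (Dmat (@gcoef K) *m \col_k 'X_k) r 0 = if r == 3 :> nat then - quadQ K else 0.
Proof.
rewrite DmatE !mxE !big_ord_recl big_ord0 !mxE !X_ord4.
by case: r => [[|[|[|[|[|[|//]]]]]] ?]; rewrite /quadQ /=; ring.
Qed.

Definition Lpartner : 'cV[{mpoly K[4]}]_4 := \col_k [:: x1; 0; 0; x1 + x4]`_k.

Lemma Dmat_mul_Lpartner r :
  (Dmat (@gcoef K) *m Lpartner) r 0 =
    [:: - x1; 0; 0; 0; x1 + x4; 0]`_r * x2 + [:: 0; 0; - x1; 0; 0; x1 + x4]`_r * x3.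
Proof.
rewrite DmatE !mxE !big_ord_recl big_ord0 !mxE.
by case: r => [[|[|[|[|[|[|//]]]]]] ?]; rewrite /=; ring.
Qed.

Lemma minor4_mulX_in_Q f i :
  in_ideal (fun _ : 'I_1 => quadQ K) (minor4 (@gcoef K) f * 'X_i).
Proof.
have := @det_rowsub_mul_in_ideal _ _ _ (fun=> quadQ K) _ _ _ (\col_k 'X_k) f i.
rewrite mxE; apply => r; rewrite Dmat_mulX.
by case: ifP => _; [apply/in_idealN/(in_ideal_gen _ ord0) | apply: in_ideal0].
Qed.

Lemma minor4_mulX_in_L f i : in_ideal Lgen (minor4 (@gcoef K) f * 'X_i).
Proof.
have minorL k : in_ideal Lgen (minor4 (@gcoef K) f * Lpartner k 0).
  apply: det_rowsub_mul_in_ideal => r; apply/in_ideal_bool.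
  by rewrite Dmat_mul_Lpartner; do 2 eexists.
rewrite X_ord4; case: i => [[|[|[|[|//]]]] ?] /=.
- by have := minorL ord0; rewrite mxE.
- by apply/in_idealMl/(in_ideal_gen _ true).
- by apply/in_idealMl/(in_ideal_gen _ false).
- have := in_idealB (minorL ord_max) (minorL ord0); rewrite !mxE /=.
  by rewrite -mulrBr addrC addKr.
Qed.

Lemma minor4_seqE (s : seq nat) : all (fun r => r < 6)%N s ->
  minor4 (@gcoef K) [ffun r : 'I_4 => inord (nth 0%N s r)] =
  \det (\matrix_(i < 4, j < 4) Dentry (nth 0%N s i) j).
Proof.
move=> s_lt6; rewrite /minor4 DmatE; congr (\det _); apply/matrixP => i j.
rewrite !mxE ffunE inordK //.
have [/(all_nthP 0%N s_lt6) //|s_le] := ltnP i (size s).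
by rewrite nth_default.
Qed.

Lemma in_ideal_minor4 (s : seq nat) (b : bool) q : all (fun r => r < 6)%N s ->
  (-1) ^+ b * \det (\matrix_(i < 4, j < 4) Dentry (nth 0%N s i) j) = q ->
  in_ideal (minor4 (@gcoef K)) q.
Proof. by move=> s_lt6 <-; rewrite -minor4_seqE //; apply/in_idealMl/in_ideal_gen. Qed.

Ltac minor_multiple s b :=
  apply: (@in_ideal_minor4 s b) => //;
  rewrite (det_mx44 (fun x y => Dentry (nth 0%N s x) y)) /quadQ /=; ring.

Lemma Lgen_mulQX_in_minors b i :
  in_ideal (minor4 (@gcoef K)) (Lgen b * quadQ K * 'X_i).
Proof.
rewrite X_ord4; case: b; case: i => [[|[|[|[|//]]]] ?] /=.
- by minor_multiple [:: 0; 2; 3; 4]%N true.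
- by minor_multiple [:: 0; 1; 3; 4]%N false.
- by minor_multiple [:: 0; 1; 3; 5]%N false.
- by minor_multiple [:: 0; 3; 4; 5]%N false.
- by minor_multiple [:: 0; 2; 3; 5]%N true.
- by minor_multiple [:: 0; 1; 3; 5]%N false.
- by minor_multiple [:: 1; 2; 3; 5]%N true.
- by minor_multiple [:: 2; 3; 4; 5]%N false.
Qed.

End PointScheme.

Lemma point_scheme_sat_incl_QL (K : comNzRingType) :
  sat_incl (point_scheme_ideal (@gcoef K)) (@QL_ideal K).
Proof.
move=> _ [a ->]; exists 1%N => i; rewrite expr1 mulr_sumr.
by split; apply: in_ideal_sum => f; rewrite mulrCA; apply: in_idealMl;
  rewrite mulrC; [apply: minor4_mulX_in_Q | apply: minor4_mulX_in_L].
Qed.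

Definition Lsubst (K : comNzRingType) : 4.-tuple {mpoly K[4]} := [tuple x1; 0; 0; x4].

Lemma in_ideal_Lgen_mulQ (K : idomainType) a :
  in_ideal (Lgen K) (a * quadQ K) -> in_ideal (Lgen K) a.
Proof.
apply: (in_ideal_mulr_cancel (lq := Lsubst K)).
- move=> i; rewrite X_ord4; case: i => [[|[|[|[|//]]]] ?] /=; rewrite ?subrr ?subr0.
  + exact: in_ideal0.
  + exact: (in_ideal_gen _ true).
  + exact: (in_ideal_gen _ false).
  + exact: in_ideal0.
- by case; rewrite /= comp_mpolyXU.
rewrite /quadQ rmorphB !rmorphM /= !comp_mpolyXU /= mul0r subr0.
apply/eqP => /(congr1 (meval (fun=> 1))).
by rewrite mevalM mevalXU mulr1 meval0 => /eqP; rewrite oner_eq0.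
Qed.

Lemma QL_sat_incl_point_scheme (K : idomainType) :
  sat_incl (@QL_ideal K) (point_scheme_ideal (@gcoef K)).
Proof.
move=> p [[a pE] pL]; exists 1%N => i; rewrite big_ord1 in pE.
have aL : in_ideal (Lgen K) (a ord0) by apply: in_ideal_Lgen_mulQ; rewrite -pE; exact: pL.
rewrite /point_scheme_ideal expr1 mulrC pE.
apply: (in_ideal_trans (h := fun b => Lgen K b * quadQ K * 'X_i)).
  by move=> b; apply: Lgen_mulQX_in_minors.
by do 2 apply: in_ideal_mulr_gen.
Qed.

Lemma meval_mderivX (R : comNzRingType) n (i j : 'I_n) (v : 'I_n -> R) :
  (mderiv i 'X_j).@[v] = (j == i)%:R.
Proof.
rewrite mderivX mevalZ mnm1E; case: eqP => [->|_]; last by rewrite mul0r.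
have -> : (U_(i) - U_(i))%MM = 0%MM by apply/mnmP => k; rewrite mnmBE subnn mnm0E.
by rewrite mpolyX0 meval1 mulr1.
Qed.

Definition e4 (K : comNzRingType) : 'I_4 -> K := fun i => (i == 3 :> nat)%:R.

Lemma meval_mderiv_quadQ_e4 (K : comNzRingType) (i : 'I_4) :
  (mderiv i (quadQ K)).@[e4 K] = - (i == 2 :> nat)%:R.
Proof.
rewrite /quadQ expr2 mderivB !mderivM mevalB !mevalD !mevalM !meval_mderivX.
by rewrite !mevalXU /e4; case: i => [[|[|[|[|//]]]] ?] /=; ring.
Qed.

Lemma gradQ_e4_dot (K : comNzRingType) (q : 'I_4 -> K) :
  \sum_(i < 4) (mderiv i (quadQ K)).@[e4 K] * q i = - (@x3 K).@[q].
Proof.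
rewrite mevalXU (bigD1 (@Ordinal 4 2 isT)) //= big1 => [|j j_neq2].
  by rewrite meval_mderiv_quadQ_e4 mulN1r addr0.
have j_neq2' : (j == 2 :> nat) = false := negbTE j_neq2.
by rewrite meval_mderiv_quadQ_e4 j_neq2' oppr0 mul0r.
Qed.

Theorem proposition4 (K : closedFieldType) (hK : 2 \notin [pchar K]) :
  (* the point scheme of A equals Q u L as subschemes of P^3 *)
  same_subscheme (point_scheme_ideal (@gcoef K)) (@QL_ideal K) /\
  (* L is tangent to Q at a nonsingular point of Q *)
  exists p : 'I_4 -> K,
    [/\ (exists i, p i != 0),
        (quadQ K).@[p] = 0, (@x2 K).@[p] = 0 /\ (@x3 K).@[p] = 0,
        (exists i, (mderiv i (quadQ K)).@[p] != 0)
      & forall q : 'I_4 -> K, (@x2 K).@[q] = 0 -> (@x3 K).@[q] = 0 ->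
          \sum_(i < 4) (mderiv i (quadQ K)).@[p] * q i = 0].
Proof.
split; first by split; [apply: point_scheme_sat_incl_QL | apply: QL_sat_incl_point_scheme].
exists (e4 K); split.
- by exists ord_max; rewrite /e4 /= oner_eq0.
- by rewrite /quadQ mevalB !mevalM !mevalXU /e4 /=; ring.
- by rewrite !mevalXU.
- by exists (@Ordinal 4 2 isT); rewrite meval_mderiv_quadQ_e4 oppr_eq0 oner_eq0.
- by move=> q _ q3; rewrite gradQ_e4_dot q3 oppr0.
Qed.
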